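(* Let $R$ be a commutative ring with $1\neq 0$, $S\subseteq R$ a multiplicatively closed subset, and $M$ a finitely generated faithful multiplication $R$-module. For an ideal $I$ of $R$, the submodule $IM$ is an $S$-quasi-copure submodule of $M$ if and only if $I$ is an $S$-quasi-copure ideal of $R$ (i.e., an $S$-quasi-copure submodule of the $R$-module $R$).
   Context: All rings are commutative with $1\neq 0$ and all modules are unital. A multiplicatively closed subset (m.c.s.) $S$ of $R$ is a subset with $0\notin S$, $1\in S$, and $ss'\in S$ for all $s,s'\in S$. $M$ is a multiplication module if every submodule of $M$ equals $JM$ for some ideal $J$; faithful means $\mathrm{Ann}_R(M)=0$. For an ideal $I$ and submodule $L$, $(L:_M I)=\{m\in M: Im\subseteq L\}$, $(0:_M I)=\{m\in M: Im=0\}$, $(L:_R M)=\{r\in R: rM\subseteq L\}$. A submodule $P$ of $M$ with $(P:_R M)\cap S=\emptyset$ is $S$-prime if there exists $s\in S$ such that whenever $am\in P$ ($a\in R$, $m\in M$), then $sa\in(P:_R M)$ or $sm\in P$; $S$-prime ideals are $S$-prime submodules of $R$. A submodule $L$ of $M$ is $S$-copure if there exists $s\in S$ such that $s(L:_M I)\subseteq L+(0:_M I)$ for every ideal $I$ of $R$. A submodule $N$ of $M$ is $S$-quasi-copure if every $S$-prime submodule of $M$ containing $N$ is $S$-copure. *)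

From HB Require Import structures.
From mathcomp Require Import all_boot all_order all_algebra.
Set Implicit Arguments. Unset Strict Implicit. Unset Printing Implicit Defensive.
Import GRing.Theory.
Local Open Scope ring_scope.

(* Subsets are Prop-valued predicates.  Ideals of R are the submodules of the
   regular module R^o. *)
Section Defs.
Variable R : comNzRingType.

Definition mcs (S : R -> Prop) : Prop :=
  ~ S 0 /\ S 1 /\ (forall s t, S s -> S t -> S (s * t)).

Variable M : lmodType R.

Definition is_submodule (N : M -> Prop) : Prop :=
  N 0 /\ (forall x y, N x -> N y -> N (x + y)) /\
  (forall (a : R) x, N x -> N (a *: x)).

Definition prodIM (I : R -> Prop) : M -> Prop :=
  fun x => exists (n : nat) (a : 'I_n -> R) (m : 'I_n -> M),
    (forall i, I (a i)) /\ x = \sum_(i < n) a i *: m i.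

Definition colonR (L : M -> Prop) : R -> Prop :=
  fun r => forall m : M, L (r *: m).

Definition colonM (L : M -> Prop) (I : R -> Prop) : M -> Prop :=
  fun m => forall a, I a -> L (a *: m).

Definition annM (I : R -> Prop) : M -> Prop :=
  fun m => forall a, I a -> a *: m = 0.

Definition faithful : Prop := forall r : R, (forall m : M, r *: m = 0) -> r = 0.

Definition fin_gen : Prop :=
  exists (n : nat) (g : 'I_n -> M),
    forall x, exists c : 'I_n -> R, x = \sum_(i < n) c i *: g i.

End Defs.

Definition is_ideal (R : comNzRingType) (I : R -> Prop) : Prop :=
  @is_submodule R R^o I.

Section Defs2.
Variable R : comNzRingType.
Variable M : lmodType R.

Definition multiplication_module : Prop :=
  forall N : M -> Prop, is_submodule N ->
    exists J : R -> Prop, is_ideal J /\ (forall x, N x <-> prodIM J x).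

Definition S_prime (S : R -> Prop) (P : M -> Prop) : Prop :=
  is_submodule P /\ (forall s, S s -> ~ colonR P s) /\
  exists s, S s /\ forall (a : R) (m : M), P (a *: m) ->
     colonR P (s * a) \/ P (s *: m).

Definition S_copure (S : R -> Prop) (L : M -> Prop) : Prop :=
  is_submodule L /\
  exists s, S s /\ forall I : R -> Prop, is_ideal I ->
    forall m, colonM L I m ->
      exists l c, L l /\ annM I c /\ s *: m = l + c.

Definition S_quasi_copure (S : R -> Prop) (N : M -> Prop) : Prop :=
  is_submodule N /\
  forall P : M -> Prop, S_prime S P -> (forall x, N x -> P x) -> S_copure S P.

End Defs2.

From mathcomp Require Import all_boot all_order all_algebra perm.
From Stdlib Require Import Classical.
Set Implicit Arguments. Unset Strict Implicit. Unset Printing Implicit Defensive.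
Import GRing.Theory.
Local Open Scope ring_scope.

(* Then
   p |-> p M and P |-> (P :_R M) transfer S-primeness and S-copureness
   between ideals of R and submodules of M, and I <= p iff I M <= p M,
   I M <= P iff I <= (P :_R M). *)

Section Submodules.
Variables (R : comNzRingType) (M : lmodType R).
Implicit Types (N L P : M -> Prop) (I J : R -> Prop).

Lemma submod0 N : is_submodule N -> N 0.
Proof. by case. Qed.

Lemma submodD N : is_submodule N -> forall x y, N x -> N y -> N (x + y).
Proof. by case=> _ []. Qed.

Lemma submodZ N : is_submodule N -> forall (a : R) x, N x -> N (a *: x).
Proof. by case=> _ []. Qed.

Lemma submod_sum N : is_submodule N -> forall n (F : 'I_n -> M),
  (forall i, N (F i)) -> N (\sum_(i < n) F i).
Proof. by move=> HN n F HF; apply: big_ind => //; [apply: submod0 | apply: submodD]. Qed.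

End Submodules.

Lemma idealM (R : comNzRingType) (I : R -> Prop) :
  is_ideal I -> forall a x, I x -> I (a * x).
Proof. exact: (@submodZ R R^o). Qed.

Lemma idealN (R : comNzRingType) (I : R -> Prop) :
  is_ideal I -> forall x, I x -> I (- x).
Proof. by move=> HI x Ix; rewrite -mulN1r; apply: idealM. Qed.

Section Constructions.
Variables (R : comNzRingType) (M : lmodType R).
Implicit Types (N L P : M -> Prop) (I J : R -> Prop).

Definition addS (L N : M -> Prop) : M -> Prop :=
  fun x => exists l c, L l /\ N c /\ x = l + c.

Lemma addS_sub L N : is_submodule L -> is_submodule N -> is_submodule (addS L N).
Proof.
move=> HL HN; split; [|split].
- by exists 0, 0; rewrite addr0; split; [apply: submod0 | split; first apply: submod0].
- move=> x y [l1 [c1 [L1 [N1 ->]]]] [l2 [c2 [L2 [N2 ->]]]].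
  exists (l1 + l2), (c1 + c2); rewrite addrACA.
  by split; [apply: submodD | split => //; apply: submodD].
- move=> a x [l [c [Ll [Nc ->]]]]; exists (a *: l), (a *: c); rewrite scalerDr.
  by split; [apply: submodZ | split => //; apply: submodZ].
Qed.

Lemma addSl L N x : is_submodule N -> L x -> addS L N x.
Proof. by move=> HN Lx; exists x, 0; rewrite addr0; do !split => //; apply: submod0. Qed.

Lemma addSr L N x : is_submodule L -> N x -> addS L N x.
Proof. by move=> HL Nx; exists 0, x; rewrite add0r; do !split => //; apply: submod0. Qed.

Lemma annM_sub J : is_submodule (@annM R M J).
Proof.
split; [|split].
- by move=> a _; rewrite scaler0.
- by move=> x y Hx Hy a Ja; rewrite scalerDr Hx ?Hy // addr0.
- by move=> r x Hx a Ja; rewrite scalerA mulrC -scalerA Hx // scaler0.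
Qed.

Definition cyclic (m : M) : M -> Prop := fun x => exists r, x = r *: m.

Lemma cyclic_sub m : is_submodule (cyclic m).
Proof.
split; [|split].
- by exists 0; rewrite scale0r.
- by move=> x y [r ->] [t ->]; exists (r + t); rewrite scalerDl.
- by move=> a x [r ->]; exists (a * r); rewrite scalerA.
Qed.

Lemma colonR_ideal N : is_submodule N -> is_ideal (colonR N).
Proof.
move=> HN; split; [|split].
- by move=> m; rewrite scale0r; apply: submod0.
- by move=> x y Hx Hy m; rewrite scalerDl; apply: submodD.
- move=> a x Hx m; change (N ((a * x) *: m)); rewrite -scalerA; exact: submodZ.
Qed.

Lemma prodIM_single I a (m : M) : I a -> prodIM I (a *: m).
Proof. by move=> Ia; exists 1%N, (fun _ => a), (fun _ => m); rewrite big_ord1. Qed.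

Lemma prodIM_mono I J (x : M) : (forall a, I a -> J a) -> prodIM I x -> prodIM J x.
Proof. by move=> H [n [a [m [Ia ->]]]]; exists n, a, m; split => // i; apply: H. Qed.

Lemma prodIM_le N I x : is_submodule N ->
  (forall a m, I a -> N (a *: m)) -> prodIM I x -> N x.
Proof. by move=> HN H [n [a [m [Ia ->]]]]; apply: submod_sum => // i; apply: H. Qed.

(* I M is a submodule: concatenate the two sums for closure under +. *)
Lemma prodIM_sub I : is_ideal I -> is_submodule (@prodIM R M I).
Proof.
move=> HI; split; [|split].
- by exists 0%N, (fun _ => 0), (fun _ => 0); rewrite big_ord0; split => // -[].
- move=> x y [n1 [a1 [m1 [I1 ->]]]] [n2 [a2 [m2 [I2 ->]]]].
  exists (n1 + n2)%N, (fun i => match split i with inl j => a1 j | inr j => a2 j end),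
    (fun i => match split i with inl j => m1 j | inr j => m2 j end).
  split; first by move=> i; case: (split i).
  rewrite big_split_ord /=; congr (_ + _); apply: eq_bigr => j _.
  + by rewrite (unsplitK (inl j : 'I_n1 + 'I_n2)).
  + by rewrite (unsplitK (inr j : 'I_n1 + 'I_n2)).
- move=> r x [n [a [m [Ia ->]]]]; exists n, (fun i => r * a i), m; split.
  + by move=> i; apply: idealM.
  + by rewrite scaler_sumr; apply: eq_bigr => i _; rewrite scalerA.
Qed.

End Constructions.

Section DeterminantTrick.
Variable R : comNzRingType.

Lemma det_one_sub_congr (Q : R -> Prop) n (C : 'M[R]_n) : is_ideal Q ->
  (forall i j, Q (C i j)) -> Q (\det (1%:M - C) - 1).
Proof.
move=> HQ HC; rewrite /determinant (bigD1 (1%g : 'S_n)) //= odd_perm1 expr0 mul1r addrAC.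
apply: (submodD HQ).
- apply: (big_ind (fun x => Q (x - 1))); first by rewrite subrr; apply: submod0 HQ.
  + move=> x y Qx Qy.
    have -> : x * y - 1 = y * (x - 1) + (y - 1) by rewrite mulrBr mulr1 mulrC addrA subrK.
    by apply: (submodD HQ) => //; exact: idealM HQ _ _ Qx.
  + move=> i _; rewrite perm1 !mxE eqxx mulr1n addrAC subrr add0r; exact: idealN.
- apply: (big_ind Q) => [|x y Qx Qy|s s1]; [exact: submod0 HQ | exact: submodD HQ _ _ Qx Qy |].
  have [i si] : exists i, s i != i.
    apply/existsP; rewrite -negb_forall; apply: contra s1 => /forallP H.
    by apply/eqP/permP => x; rewrite perm1; apply/eqP.
  apply: idealM => //; rewrite (bigD1 i) //= mulrC; apply: idealM => //.
  by rewrite !mxE eq_sym (negbTE si) mulr0n sub0r; apply: idealN.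
Qed.

Variable M : lmodType R.

(* If the generators g satisfy g = C g, then det (1 - C) kills every g k
   (multiply 0 = (1 - C) g on the left by the adjugate). *)
Lemma det_one_sub_kills n (g : 'I_n -> M) (C : 'M[R]_n) :
  (forall i, g i = \sum_j C i j *: g j) -> forall k, \det (1%:M - C) *: g k = 0.
Proof.
move=> HC k.
have delta_sum (a : R) l : \sum_j (a *+ (l == j)) *: g j = a *: g l.
  rewrite (bigD1 l) //= big1 ?addr0 ?eqxx ?mulr1n // => j jl.
  by rewrite eq_sym (negbTE jl) mulr0n scale0r.
have kernel i : \sum_j (1%:M - C) i j *: g j = 0.
  under eq_bigr => j _ do rewrite !mxE scalerDl scaleNr.
  by rewrite big_split /= sumrN delta_sum scale1r -HC subrr.
have scalar_sum : \sum_j (\det (1%:M - C))%:M k j *: g j = \det (1%:M - C) *: g k.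
  by under eq_bigr => j _ do rewrite mxE; rewrite delta_sum.
rewrite -scalar_sum -mul_adj_mx.
under eq_bigr => j _ do rewrite mxE scaler_suml.
rewrite exchange_big /= big1 // => i _.
under eq_bigr => j _ do rewrite -scalerA.
by rewrite -scaler_sumr kernel scaler0.
Qed.

End DeterminantTrick.

Definition sum_ideals (R : comNzRingType) n (A : 'I_n -> R -> Prop) : R -> Prop :=
  fun x => exists e : 'I_n -> R, (forall j, A j (e j)) /\ x = \sum_j e j.

Lemma sum_ideals_ideal (R : comNzRingType) n (A : 'I_n -> R -> Prop) :
  (forall j, is_ideal (A j)) -> is_ideal (sum_ideals A).
Proof.
move=> HA; split; [|split].
- by exists (fun _ => 0); rewrite big1 //; split => // j; apply: submod0 (HA j).
- move=> x y [e1 [H1 ->]] [e2 [H2 ->]]; exists (fun j => e1 j + e2 j).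
  by rewrite big_split; split => // j; apply: submodD (HA j) _ _ (H1 j) (H2 j).
- move=> a x [e [H ->]]; exists (fun j => a * e j).
  by rewrite -mulr_sumr; split => // j; apply: idealM (HA j) _ _ (H j).
Qed.

Section MultiplicationModules.
Variables (R : comNzRingType) (M : lmodType R).
Hypothesis mult : multiplication_module M.

Lemma multmodE (N : M -> Prop) : is_submodule N ->
  forall x, N x <-> prodIM (colonR N) x.
Proof.
move=> HN; have [J [HJ E]] := mult HN => x; split.
- by move/E; apply: prodIM_mono => a Ja m; apply/E; apply: prodIM_single.
- by apply: prodIM_le => // a m; apply.
Qed.

Lemma cyclic_multmod (m : M) : prodIM (colonR (cyclic m)) m.
Proof. by apply/(multmodE (cyclic_sub m)); exists 1; rewrite scale1r. Qed.

Hypotheses (fg : fin_gen M) (faith : faithful M).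

(* Writing each g_j as
   C_j g with C_j in (R g_j :_R M) and applying the determinant trick gives
   det (1 - C) = 0, so 1 lies in the sum of the ideals (R g_j :_R M). *)
Lemma partition_of_unity : exists n (g : 'I_n -> M) (f : 'I_n -> R),
  \sum_j f j = 1 /\ forall j x, cyclic (g j) (f j *: x).
Proof.
have [n [g Hg]] := fg.
pose A j := colonR (cyclic (g j)).
have HA j : is_ideal (A j) := colonR_ideal (cyclic_sub (g j)).
have row j : exists c : 'I_n -> R, (forall k, A j (c k)) /\ g j = \sum_k c k *: g k.
  have [n' [a [m [Ha Em]]]] := cyclic_multmod (g j).
  have [d Hd] := fin_all_exists (fun t => Hg (m t)).
  exists (fun k => \sum_t a t * d t k); split.
  - move=> k; apply: (@submod_sum R R^o _ (HA j)) => t.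
    by rewrite mulrC; apply: idealM (HA j) _ _ (Ha t).
  - rewrite Em; under eq_bigr => t _ do rewrite (Hd t) scaler_sumr.
    rewrite exchange_big /=; apply: eq_bigr => k _; rewrite scaler_suml.
    by apply: eq_bigr => t _; rewrite scalerA.
have [C HC] := fin_all_exists row.
pose Cm := \matrix_(i, j) C i j : 'M[R]_n.
have det0 : \det (1%:M - Cm) = 0.
  have kill := @det_one_sub_kills R M n g Cm.
  apply: faith => x; have [c ->] := Hg x; rewrite scaler_sumr big1 // => i _.
  rewrite scalerA mulrC -scalerA kill ?scaler0 // => l.
  by rewrite {1}(HC l).2; apply: eq_bigr => j _; rewrite mxE.
have : sum_ideals A (\det (1%:M - Cm) - 1).
  apply: det_one_sub_congr; first exact: sum_ideals_ideal.
  move=> i j; exists (fun j' => if j' == i then C i j else 0); split.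
  - by move=> j'; case: eqP => [->|_]; [exact: (HC i).1 | apply: submod0 (HA j')].
  - by rewrite (bigD1 i) //= eqxx big1 ?addr0 ?mxE // => j' /negbTE ->.
rewrite det0 sub0r => -[e [He E]].
exists n, g, (fun j => - e j); split.
- by rewrite sumrN -E opprK.
- by move=> j x; have [r Er] := He j x; exists (- r); rewrite !scaleNr Er.
Qed.

End MultiplicationModules.

Section Radical.
Variables (R : comNzRingType) (K : R -> Prop).
Hypothesis HK : is_ideal K.

Definition rad (x : R) : Prop := exists N, K (x ^+ N).

(* The radical is closed under addition (binomial expansion) and hence
   under finite sums. *)
Lemma rad_add x y : rad x -> rad y -> rad (x + y).
Proof.
move=> [k Hx] [l Hy]; exists (k + l)%N; rewrite exprDn.
apply: (@submod_sum R R^o _ HK) => i; rewrite -mulr_natr mulrC; apply: (idealM HK).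
case: (leqP l i) => li.
- have -> : y ^+ i = y ^+ (i - l) * y ^+ l by rewrite -exprD subnK.
  by do 2 apply: (idealM HK).
- have ki : (k <= k + l - i)%N by rewrite -addnBA ?leq_addr // ltnW.
  have -> : x ^+ (k + l - i) = x ^+ (k + l - i - k) * x ^+ k by rewrite -exprD subnK.
  by rewrite mulrC; do 2 apply: (idealM HK).
Qed.

Lemma rad_sum n (f : 'I_n -> R) : (forall j, rad (f j)) -> rad (\sum_j f j).
Proof.
move=> H; apply: big_ind => //; last exact: rad_add.
by exists 1%N; rewrite expr1; apply: submod0 HK.
Qed.

End Radical.

Definition ideal_quot (R : comNzRingType) (B : R -> Prop) (a : R) : R -> Prop :=
  fun r => B (r * a).

Lemma ideal_quot_ideal (R : comNzRingType) (B : R -> Prop) a :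
  is_ideal B -> is_ideal (ideal_quot B a).
Proof.
move=> HB; split; [|split].
- by rewrite /ideal_quot mul0r; apply: submod0 HB.
- by move=> x y Hx Hy; rewrite /ideal_quot mulrDl; apply: submodD HB _ _ Hx Hy.
- by move=> c x Hx; rewrite /ideal_quot -[_ *: _]/(c * x) -mulrA; apply: idealM.
Qed.

Section Cancellation.
Variables (R : comNzRingType) (M : lmodType R).
Hypothesis faith : faithful M.

(* Local form of cancellation: if a M <= B M and f M <= R g, then
   f^3 a lies in B.  Indeed f a (f g) = b g for some b in B, and the
   element (a f^2 - b) f kills M. *)
Lemma cube_cancel (B : R -> Prop) (a f : R) (g : M) : is_ideal B ->
  (forall m : M, prodIM B (a *: m)) -> (forall x, cyclic g (f *: x)) ->
  B (f ^+ 3 * a).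
Proof.
move=> HB HaB Hf.
have [nb [b [y [Hb Ey]]]] := HaB (f *: g).
have [r Hr] := fin_all_exists (fun t => Hf (y t)).
pose bb := \sum_t b t * r t.
have Bbb : B bb.
  by apply: (@submod_sum R R^o _ HB) => t; rewrite mulrC; apply: idealM.
have kill_g : (a * f * f - bb) *: g = 0.
  apply/eqP; rewrite scalerBl subr_eq0; apply/eqP.
  have -> : (a * f * f) *: g = f *: (a *: (f *: g)) by rewrite !scalerA [f * a]mulrC.
  rewrite Ey scaler_sumr /bb scaler_suml; apply: eq_bigr => t _.
  by rewrite scalerA mulrC -scalerA (Hr t) scalerA.
have kill_M : (a * f * f - bb) * f = 0.
  apply: faith => x; have [s Hs] := Hf x.
  by rewrite -scalerA Hs scalerA mulrC -scalerA kill_g scaler0.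
have -> : f ^+ 3 * a = f * bb.
  apply/eqP; rewrite -subr_eq0 -[X in _ == X]kill_M mulrBl mulrC; apply/eqP.
  by rewrite !exprS expr0 mulr1 [f * bb]mulrC !mulrA.
exact: idealM.
Qed.

Hypotheses (mult : multiplication_module M) (fg : fin_gen M).

(* Cancellation: (B M :_R M) = B for every ideal B.  Each f_j of the
   partition of unity lies in the radical of (B :_R a), hence so does 1. *)
Lemma colonR_prodIM (B : R -> Prop) (a : R) : is_ideal B ->
  colonR (@prodIM R M B) a -> B a.
Proof.
move=> HB HaB; have [n [g [f [Sf Hf]]]] := partition_of_unity mult fg faith.
have [N HN] : rad (ideal_quot B a) (\sum_j f j).
  apply: rad_sum => [|j]; first exact: ideal_quot_ideal.
  by exists 3%N; apply: cube_cancel (Hf j).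
by move: HN; rewrite Sf expr1n /ideal_quot mul1r.
Qed.

End Cancellation.

Lemma colonR_regular (R : comNzRingType) (p : R -> Prop) (r : R) :
  is_ideal p -> (@colonR R R^o p r <-> p r).
Proof.
move=> Hp; split; last by move=> pr y; change (p (r * y)); rewrite mulrC; apply: idealM.
by move/(_ 1); rewrite [_ *: _]mulr1.
Qed.

Section Transfer.
Variables (R : comNzRingType) (S : R -> Prop) (M : lmodType R).
Implicit Types (P : M -> Prop) (p J : R -> Prop).

Lemma S_prime_colonR P : S_prime S P -> @S_prime R R^o S (colonR P).
Proof.
move=> [HP [SP [s [Ss Hs]]]]; have Hp := colonR_ideal HP.
split => //; split => [t St /(colonR_regular _ Hp)|]; first exact: SP.
exists s; split => // a k pak.
case: (classic (colonR P (s * a))) => [sa|nsa]; first by left; apply/colonR_regular.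
right => m; change (P ((s * k) *: m)); rewrite -scalerA.
have : P (a *: (k *: m)) by rewrite scalerA; apply: pak.
by case/Hs.
Qed.

(* If k M <= R m and a m lies in a submodule N, then a k M <= N.  Combined
   with m in (R m :_R M) M this reduces statements about a m to the
   coefficients k in (R m :_R M). *)
Lemma cyclic_colon_mul (N : M -> Prop) (m : M) (a k : R) : is_submodule N ->
  colonR (cyclic m) k -> N (a *: m) -> colonR N (a * k).
Proof.
move=> HN Hk Nam x; have [r Er] := Hk x.
by rewrite -scalerA Er scalerA mulrC -scalerA; apply: submodZ.
Qed.

Hypothesis mult : multiplication_module M.

Lemma S_copure_of_colonR P : is_submodule P ->
  @S_copure R R^o S (colonR P) -> S_copure S P.
Proof.
move=> HP [_ [s [Ss Hc]]]; split => //; exists s; split => // J HJ m Hm.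
suff : addS P (annM J) (s *: m) by [].
have [n [c [mm [Hcm ->]]]] := cyclic_multmod mult m.
rewrite scaler_sumr; apply: (submod_sum (addS_sub HP (annM_sub M J))) => i.
have [l [e [pl [Ae E]]]] : exists l e, colonR P l /\ @annM R R^o J e /\ s * c i = l + e.
  apply: (Hc J HJ (c i)) => j Jj; change (colonR P (j * c i)).
  exact: cyclic_colon_mul HP (Hcm i) (Hm j Jj).
exists (l *: mm i), (e *: mm i); rewrite scalerA E scalerDl; split => //; split => //.
by move=> j Jj; rewrite scalerA [j * e]Ae // scale0r.
Qed.

Hypotheses (fg : fin_gen M) (faith : faithful M).

Lemma colonR_annM J (k : R) : colonR (@annM R M J) k -> @annM R R^o J k.
Proof.
move=> Hk j Jj; apply: faith => y.
by change ((j * k) *: y = 0); rewrite -scalerA; apply: Hk.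
Qed.

(* By
   cancellation (p M :_R M) = p; if a m lies in p M then a k lies in p for
   every k in (R m :_R M), and S-primeness of p is applied to each such k. *)
Lemma S_prime_prodIM p : @S_prime R R^o S p -> S_prime S (@prodIM R M p).
Proof.
move=> [Hp [Sp [s [Ss Hs]]]]; have HP := prodIM_sub M Hp.
have colP r : colonR (@prodIM R M p) r -> p r by apply: colonR_prodIM.
split => //; split => [t St /colP /(colonR_regular _ Hp)|]; first exact: Sp.
exists s; split => // a m Pam.
have aK k : colonR (cyclic m) k -> p (a * k).
  by move=> Hk; apply/colP; apply: cyclic_colon_mul HP Hk Pam.
case: (classic (p (s * a))) => [psa|npsa].
  by left => x; apply: prodIM_single.
right; have [n [c [mm [Hcm ->]]]] := cyclic_multmod mult m.
rewrite scaler_sumr; apply: (submod_sum HP) => i; rewrite scalerA.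
apply: prodIM_single; case: (Hs a (c i) (aK _ (Hcm i))) => [/(colonR_regular _ Hp) /npsa|] //.
Qed.

(* If p M is S-copure, so is p: with T := p + (0 :_R J), one shows
   s x M <= T M and cancels M. *)
Lemma S_copure_of_prodIM p : is_ideal p ->
  S_copure S (@prodIM R M p) -> @S_copure R R^o S p.
Proof.
move=> Hp [_ [s [Ss Hc]]]; split => //; exists s; split => // J HJ x Hx.
pose T := @addS R R^o p (@annM R R^o J).
have HT : is_ideal T := addS_sub Hp (annM_sub R^o J).
apply: (colonR_prodIM faith mult fg HT) => m.
have Hxm : colonM (prodIM p) J (x *: m).
  by move=> j Jj; rewrite scalerA; apply: prodIM_single; exact: Hx j Jj.
have [l [c [Pl [Ac E]]]] := Hc J HJ _ Hxm.
rewrite -scalerA E; apply: submodD (prodIM_sub M HT) _ _ _ _.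
- by apply: prodIM_mono Pl => a pa; apply: addSl (annM_sub R^o J) pa.
- have := (multmodE mult (annM_sub M J) c).1 Ac; apply: prodIM_mono => k Hk.
  by apply: addSr Hp _; apply: colonR_annM.
Qed.

End Transfer.

Theorem theorem3p6 (R : comNzRingType) (S : R -> Prop) (M : lmodType R) :
  mcs S -> fin_gen M -> faithful M -> multiplication_module M ->
  forall I : R -> Prop, is_ideal I ->
    (S_quasi_copure S (@prodIM R M I) <-> @S_quasi_copure R R^o S I).
Proof.
move=> _ fg faith mult I HI; split.
- (* an S-prime ideal p >= I gives the S-prime submodule p M >= I M *)
  case=> _ HQ; split => // p Sp Ip; have Hp := Sp.1.
  apply: (S_copure_of_prodIM mult fg faith Hp).
  apply: HQ; first exact: S_prime_prodIM.
  by move=> x; apply: prodIM_mono.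
- (* an S-prime submodule P >= I M gives the S-prime ideal (P :_R M) >= I *)
  case=> _ HQ; split; first exact: prodIM_sub.
  move=> P SP IP; apply: (S_copure_of_colonR mult SP.1).
  apply: HQ; first exact: S_prime_colonR.
  by move=> a Ia m; apply: IP; apply: prodIM_single.
Qed.
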